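(* For each $k\in\mathbb{N}$, the set $\mathcal{A}_k=\{K\in\mathcal{K}^2_*: \mathrm{conv}\,\mathcal{M}_K \text{ has at most } k \text{ exposed points}\}$ is closed in $\mathcal{K}^2_*$.
   Context: $\mathcal{K}^2_*$ is the set of strictly convex bodies (nonempty compact convex subsets of $\mathbb{R}^2$ whose boundary contains no nondegenerate segment), with the Hausdorff metric. For $K\in\mathcal{K}^2_*$ and $u\in\mathbb{S}^1$, $x_K(u)$ is the unique point of $K$ on its supporting line with outer unit normal $u$, $m_K(u)=\frac12[x_K(u)+x_K(-u)]$, and the middle hedgehog is $\mathcal{M}_K=\{m_K(u):u\in\mathbb{S}^1\}$. *)

From Stdlib Require Import Reals List.
Open Scope R_scope.

Definition pt := (R * R)%type.
Definition pset := pt -> Prop.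

Definition dot (x y : pt) : R := fst x * fst y + snd x * snd y.
Definition padd (x y : pt) : pt := (fst x + fst y, snd x + snd y).
Definition pscale (a : R) (x : pt) : pt := (a * fst x, a * snd x).
Definition popp (x : pt) : pt := (- fst x, - snd x).
Definition dist2 (x y : pt) : R :=
  sqrt ((fst x - fst y)^2 + (snd x - snd y)^2).

Definition unit_vec (u : pt) : Prop := dot u u = 1.

Definition is_convex (K : pset) : Prop :=
  forall x y t, K x -> K y -> 0 <= t <= 1 ->
    K (padd (pscale (1 - t) x) (pscale t y)).

Definition is_closed (K : pset) : Prop :=
  forall x, (forall eps, 0 < eps -> exists y, K y /\ dist2 x y < eps) -> K x.

Definition is_bounded (K : pset) : Prop :=
  exists r, forall x, K x -> dist2 x (0,0) <= r.

(* compact subsets of R^2 = closed and bounded (Heine-Borel) *)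
Definition is_compact (K : pset) : Prop := is_closed K /\ is_bounded K.

Definition is_nonempty (K : pset) : Prop := exists x, K x.

Definition convex_body (K : pset) : Prop :=
  is_nonempty K /\ is_compact K /\ is_convex K.

(* topological boundary (K closed, so boundary points lie in K) *)
Definition boundary (K : pset) : pset :=
  fun x => K x /\ forall eps, 0 < eps -> exists y, dist2 x y < eps /\ ~ K y.

Definition segment (a b : pt) : pset :=
  fun z => exists t, 0 <= t <= 1 /\ z = padd (pscale (1 - t) a) (pscale t b).

Definition strictly_convex_body (K : pset) : Prop :=
  convex_body K /\
  forall a b, a <> b -> ~ (forall z, segment a b z -> boundary K z).

(* x is a point of K on its supporting line with outer unit normal u;
   for K strictly convex such a point exists and is unique: x_K(u). *)
Definition support_point (K : pset) (u x : pt) : Prop :=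
  K x /\ forall y, K y -> dot y u <= dot x u.

Definition middle_hedgehog (K : pset) : pset :=
  fun m => exists u x y, unit_vec u /\ support_point K u x /\
    support_point K (popp u) y /\ m = pscale (1/2) (padd x y).

Definition conv (M : pset) : pset :=
  fun x => forall C, is_convex C -> (forall y, M y -> C y) -> C x.

Definition exposed_point (C : pset) (x : pt) : Prop :=
  C x /\ exists u, u <> (0,0) /\ forall y, C y -> y <> x -> dot y u < dot x u.

Definition at_most_k_exposed (k : nat) (C : pset) : Prop :=
  exists l : list pt, (length l <= k)%nat /\
    forall x, exposed_point C x -> In x l.

Definition A_k (k : nat) (K : pset) : Prop :=
  strictly_convex_body K /\ at_most_k_exposed k (conv (middle_hedgehog K)).

Definition hausdorff_le (K L : pset) (delta : R) : Prop :=
  (forall x, K x -> exists y, L y /\ dist2 x y <= delta) /\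
  (forall y, L y -> exists x, K x /\ dist2 x y <= delta).

(* d_H(K,L) < eps, where d_H(K,L) = inf { delta >= 0 : hausdorff_le K L delta } *)
Definition hausdorff_lt (K L : pset) (eps : R) : Prop :=
  exists delta, 0 <= delta < eps /\ hausdorff_le K L delta.

(* A is closed in the metric space (K^2_*, d_H): its complement in K^2_* is open *)
Definition closed_in_Kstar (A : pset -> Prop) : Prop :=
  forall K, strictly_convex_body K -> ~ A K ->
    exists eps, 0 < eps /\
      forall L, strictly_convex_body L -> hausdorff_lt K L eps -> ~ A L.

(* For a strictly convex body K the support point x_K(u) is unique, and a
   compactness argument makes near-maximisers of <_, u> close to it uniformly in u.
   Hence the middle hedgehog M_K is compact and moves continuously with K in the
   Hausdorff metric.  An exposed point p of conv M_K lies in M_K and persists under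
   small perturbations: for L near K, the point of M_L farthest from a centre placed
   far behind p (against its exposing direction u) is an exposed point of conv M_L,
   and it must be close to p because the points of M_K away from p are lower than p
   in the direction u by a definite gap.  So k+1 distinct exposed points of conv M_K
   give k+1 distinct exposed points of conv M_L for every L near K: the complement
   of A_k in K^2_* is open. *)

From Stdlib Require Import Reals List Lia Lra Psatz Classical ClassicalEpsilon.
Open Scope R_scope.

Definition psub (x y : pt) : pt := padd x (popp y).

Lemma dot_comm a b : dot a b = dot b a.
Proof. unfold dot; ring. Qed.

Lemma dot_padd_l a b u : dot (padd a b) u = dot a u + dot b u.
Proof. unfold dot, padd; simpl; ring. Qed.

Lemma dot_pscale_l c a u : dot (pscale c a) u = c * dot a u.
Proof. unfold dot, pscale; simpl; ring. Qed.

Lemma dot_psub_l a b u : dot (psub a b) u = dot a u - dot b u.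
Proof. unfold dot, psub, padd, popp; simpl; ring. Qed.

Lemma dot_self_ge_0 a : 0 <= dot a a.
Proof. unfold dot; nra. Qed.

Lemma dot_self_pos a : a <> (0,0) -> 0 < dot a a.
Proof.
  destruct a as [a1 a2]; unfold dot; simpl; intros Ha.
  destruct (Req_dec a1 0); destruct (Req_dec a2 0); subst; [contradiction| nra ..].
Qed.

Lemma unit_vec_popp u : unit_vec u -> unit_vec (popp u).
Proof. unfold unit_vec, dot, popp; simpl. lra. Qed.

Lemma dist2_ge_0 x y : 0 <= dist2 x y.
Proof. apply sqrt_pos. Qed.

Lemma dist2_sqr x y : dist2 x y * dist2 x y = dot (psub x y) (psub x y).
Proof.
  unfold dist2; rewrite sqrt_sqrt by (apply Rplus_le_le_0_compat; apply pow2_ge_0).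
  unfold dot, psub, padd, popp; simpl; ring.
Qed.

Lemma dist2_eq_sqrt x y : dist2 x y = sqrt (dot (psub x y) (psub x y)).
Proof. rewrite <- dist2_sqr, sqrt_square; [reflexivity | apply dist2_ge_0]. Qed.

Lemma dist2_sym x y : dist2 x y = dist2 y x.
Proof. unfold dist2; f_equal; ring. Qed.

Lemma dist2_refl x : dist2 x x = 0.
Proof. rewrite dist2_eq_sqrt, <- sqrt_0; f_equal; unfold dot, psub, padd, popp; simpl; ring. Qed.

Lemma dist2_pos x y : x <> y -> 0 < dist2 x y.
Proof.
  intros Hxy. rewrite dist2_eq_sqrt. apply sqrt_lt_R0, dot_self_pos.
  destruct x, y; unfold psub, padd, popp; simpl; intros E; injection E; intros.
  apply Hxy; f_equal; lra.
Qed.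

Lemma dist2_psub x y : dist2 (psub x y) (0,0) = dist2 x y.
Proof. unfold dist2, psub, padd, popp; simpl; f_equal; ring. Qed.

Lemma Rabs_le_of_sqr v P : 0 <= P -> v * v <= P * P -> Rabs v <= P.
Proof. intros. unfold Rabs; destruct (Rcase_abs v); nra. Qed.

Lemma Rabs_dot_le a b : Rabs (dot a b) <= dist2 a (0,0) * dist2 b (0,0).
Proof.
  apply Rabs_le_of_sqr; [apply Rmult_le_pos; apply dist2_ge_0|].
  replace (dist2 a (0,0) * dist2 b (0,0) * (dist2 a (0,0) * dist2 b (0,0)))
    with ((dist2 a (0,0) * dist2 a (0,0)) * (dist2 b (0,0) * dist2 b (0,0))) by ring.
  rewrite !dist2_sqr. destruct a as [a1 a2], b as [b1 b2].
  unfold dot, psub, padd, popp; simpl.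
  (* Lagrange's identity *)
  pose proof (pow2_ge_0 (a1 * b2 - a2 * b1)). nra.
Qed.

Lemma dist2_triangle x y z : dist2 x z <= dist2 x y + dist2 y z.
Proof.
  pose proof (Rabs_dot_le (psub x y) (psub y z)) as CS. rewrite !dist2_psub in CS.
  pose proof (Rle_abs (dot (psub x y) (psub y z))).
  assert (E : dot (psub x z) (psub x z) = dot (psub x y) (psub x y)
            + dot (psub y z) (psub y z) + 2 * dot (psub x y) (psub y z))
    by (unfold dot, psub, padd, popp; simpl; ring).
  rewrite <- !dist2_sqr in E.
  pose proof (dist2_ge_0 x z); pose proof (dist2_ge_0 x y); pose proof (dist2_ge_0 y z).
  nra.
Qed.

Lemma Rabs_fst_le_dist2 x y : Rabs (fst x - fst y) <= dist2 x y.
Proof.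
  apply Rabs_le_of_sqr; [apply dist2_ge_0|]. rewrite dist2_sqr.
  destruct x as [x1 x2], y as [y1 y2]; unfold dot, psub, padd, popp; simpl.
  pose proof (pow2_ge_0 (x2 - y2)). nra.
Qed.

Lemma Rabs_snd_le_dist2 x y : Rabs (snd x - snd y) <= dist2 x y.
Proof.
  apply Rabs_le_of_sqr; [apply dist2_ge_0|]. rewrite dist2_sqr.
  destruct x as [x1 x2], y as [y1 y2]; unfold dot, psub, padd, popp; simpl.
  pose proof (pow2_ge_0 (x1 - y1)). nra.
Qed.

Lemma Rabs_dot_psub_unit_le a b u : unit_vec u -> Rabs (dot (psub a b) u) <= dist2 a b.
Proof.
  intros Hu. pose proof (Rabs_dot_le (psub a b) u) as CS.
  rewrite dist2_psub in CS. replace (dist2 u (0,0)) with 1 in CS; [lra|].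
  rewrite dist2_eq_sqrt, <- sqrt_1. f_equal.
  unfold unit_vec, dot, psub, padd, popp in *; simpl in *. lra.
Qed.

Lemma dist2_midpoint_le a b c d :
  dist2 (pscale (1/2) (padd a b)) (pscale (1/2) (padd c d)) <= (dist2 a c + dist2 b d) / 2.
Proof.
  assert (E : dist2 (pscale (1/2) (padd a b)) (pscale (1/2) (padd c d))
            = dist2 (padd a b) (padd c d) / 2).
  { rewrite !dist2_eq_sqrt.
    replace (dot (psub (pscale (1/2) (padd a b)) (pscale (1/2) (padd c d)))
                 (psub (pscale (1/2) (padd a b)) (pscale (1/2) (padd c d))))
      with ((1/2) * (1/2) * dot (psub (padd a b) (padd c d)) (psub (padd a b) (padd c d)))
      by (unfold dot, psub, padd, pscale, popp; simpl; ring).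
    rewrite sqrt_mult_alt, sqrt_square by (try apply Rmult_le_pos; lra). lra. }
  assert (Ea : dist2 (padd a b) (padd c b) = dist2 a c) by (unfold dist2, padd; simpl; f_equal; ring).
  assert (Eb : dist2 (padd c b) (padd c d) = dist2 b d) by (unfold dist2, padd; simpl; f_equal; ring).
  pose proof (dist2_triangle (padd a b) (padd c b) (padd c d)). lra.
Qed.

Definition Un_cv_pt (a : nat -> pt) (l : pt) : Prop :=
  Un_cv (fun n => fst (a n)) (fst l) /\ Un_cv (fun n => snd (a n)) (snd l).

Definition strictly_increasing (f : nat -> nat) : Prop := forall n, (f n < f (S n))%nat.

Lemma strictly_increasing_le f : strictly_increasing f -> forall m n, (m <= n)%nat -> (f m <= f n)%nat.
Proof. intros Hf m n H. induction H; [lia|]. specialize (Hf m0). lia. Qed.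

Lemma strictly_increasing_ge f : strictly_increasing f -> forall n, (n <= f n)%nat.
Proof. intros Hf n. induction n; [lia|]. specialize (Hf n). lia. Qed.

Lemma strictly_increasing_comp f g :
  strictly_increasing f -> strictly_increasing g -> strictly_increasing (fun n => f (g n)).
Proof.
  intros Hf Hg n. pose proof (strictly_increasing_le f Hf (S (g n)) (g (S n)) (Hg n)).
  specialize (Hf (g n)). lia.
Qed.

Lemma Un_cv_subseq a l f : Un_cv a l -> strictly_increasing f -> Un_cv (fun n => a (f n)) l.
Proof.
  intros H Hf e He. destruct (H e He) as [N HN]. exists N. intros n Hn.
  apply HN. pose proof (strictly_increasing_ge f Hf n). lia.
Qed.

Lemma Un_cv_pt_subseq a l f :
  Un_cv_pt a l -> strictly_increasing f -> Un_cv_pt (fun n => a (f n)) l.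
Proof. intros [H1 H2] Hf. split; apply (Un_cv_subseq (fun n => _ (a n))); auto. Qed.

Lemma Un_cv_ext a b l : (forall n, a n = b n) -> Un_cv a l -> Un_cv b l.
Proof. intros E H e He. destruct (H e He) as [N HN]. exists N. intros n Hn. rewrite <- E. auto. Qed.

Lemma Un_cv_const c : Un_cv (fun _ => c) c.
Proof.
  intros e He. exists 0%nat. intros. unfold R_dist.
  replace (c - c) with 0 by ring. rewrite Rabs_R0. auto.
Qed.

Lemma inv_INR_S_pos n : 0 < / (INR n + 1).
Proof. apply Rinv_0_lt_compat. pose proof (pos_INR n); lra. Qed.

Lemma inv_INR_S_lt e : 0 < e -> exists N, forall n, (N <= n)%nat -> / (INR n + 1) < e.
Proof.
  intros He. destruct (INR_archimed e 1) as [N HN]; [lra|]. exists N. intros n Hn.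
  apply le_INR in Hn. pose proof (pos_INR N).
  apply (Rmult_lt_reg_r (INR n + 1)); [lra|]. rewrite Rinv_l by lra. nra.
Qed.

Lemma Un_cv_inv_INR_S f : strictly_increasing f -> Un_cv (fun n => / (INR (f n) + 1)) 0.
Proof.
  intros Hf e He. destruct (inv_INR_S_lt e He) as [N HN]. exists N. intros n Hn.
  unfold R_dist. rewrite Rminus_0_r, Rabs_pos_eq by (left; apply inv_INR_S_pos).
  apply HN. pose proof (strictly_increasing_ge f Hf n). lia.
Qed.

Lemma Un_cv_pt_dot a b l m :
  Un_cv_pt a l -> Un_cv_pt b m -> Un_cv (fun n => dot (a n) (b n)) (dot l m).
Proof. intros [A1 A2] [B1 B2]. unfold dot. apply CV_plus; apply CV_mult; auto. Qed.

Lemma Un_cv_pt_const c : Un_cv_pt (fun _ => c) c.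
Proof. split; apply Un_cv_const. Qed.

Lemma Un_cv_pt_padd a b l m :
  Un_cv_pt a l -> Un_cv_pt b m -> Un_cv_pt (fun n => padd (a n) (b n)) (padd l m).
Proof. intros [A1 A2] [B1 B2]. split; simpl; apply CV_plus; auto. Qed.

Lemma Un_cv_pt_pscale c a l : Un_cv_pt a l -> Un_cv_pt (fun n => pscale c (a n)) (pscale c l).
Proof. intros [A1 A2]. split; simpl; apply CV_mult; auto; apply Un_cv_const. Qed.

Lemma Un_cv_pt_popp a l : Un_cv_pt a l -> Un_cv_pt (fun n => popp (a n)) (popp l).
Proof.
  intros [A1 A2]. split; simpl;
    [apply (Un_cv_ext (opp_seq (fun n => fst (a n)))) | apply (Un_cv_ext (opp_seq (fun n => snd (a n))))];
    auto; apply CV_opp; auto.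
Qed.

Lemma Un_cv_pt_psub a b l m :
  Un_cv_pt a l -> Un_cv_pt b m -> Un_cv_pt (fun n => psub (a n) (b n)) (psub l m).
Proof. intros. apply Un_cv_pt_padd, Un_cv_pt_popp; auto. Qed.

Lemma Un_cv_pt_ext a b l : (forall n, a n = b n) -> Un_cv_pt a l -> Un_cv_pt b l.
Proof. intros E [H1 H2]. split; eapply Un_cv_ext; eauto; intros n; simpl; rewrite E; auto. Qed.

Lemma Un_cv_pt_dist2 a l :
  Un_cv_pt a l <-> forall e, 0 < e -> exists N, forall n, (n >= N)%nat -> dist2 (a n) l < e.
Proof.
  split.
  - intros [A1 A2] e He.
    destruct (A1 (e / 2)) as [N1 H1]; [lra|]. destruct (A2 (e / 2)) as [N2 H2]; [lra|].
    exists (max N1 N2). intros n Hn.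
    specialize (H1 n ltac:(lia)). specialize (H2 n ltac:(lia)). unfold R_dist in *.
    rewrite dist2_eq_sqrt, <- (sqrt_square e) by lra.
    apply sqrt_lt_1; [apply dot_self_ge_0 | nra |].
    apply Rabs_def2 in H1; apply Rabs_def2 in H2.
    unfold dot, psub, padd, popp; simpl. nra.
  - intros H. split; intros e He; destruct (H e He) as [N HN]; exists N; intros n Hn;
      specialize (HN n Hn); unfold R_dist.
    + pose proof (Rabs_fst_le_dist2 (a n) l). lra.
    + pose proof (Rabs_snd_le_dist2 (a n) l). lra.
Qed.

Lemma Un_cv_dist2 a l p : Un_cv_pt a l -> Un_cv (fun n => dist2 (a n) p) (dist2 l p).
Proof.
  intros H e He. destruct (proj1 (Un_cv_pt_dist2 a l) H e He) as [N HN].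
  exists N. intros n Hn. specialize (HN n Hn). unfold R_dist.
  pose proof (dist2_triangle (a n) l p). pose proof (dist2_triangle l (a n) p).
  rewrite (dist2_sym l (a n)) in H1. apply Rabs_def1; lra.
Qed.

Lemma Bolzano_Weierstrass_R (a : nat -> R) M : (forall n, Rabs (a n) <= M) ->
  exists f, strictly_increasing f /\ exists l, Un_cv (fun n => a (f n)) l.
Proof.
  intros HM.
  destruct (Bolzano_Weierstrass a (fun c => -M <= c <= M) (compact_P3 (-M) M)) as [l Hl].
  { intros n. specialize (HM n). unfold Rabs in HM. destruct (Rcase_abs (a n)); lra. }
  assert (Hg : forall nN : nat * nat, exists p,
             (snd nN <= p)%nat /\ Rabs (a p - l) < / (INR (fst nN) + 1)).
  { intros [n N]. destruct (Hl (fun y => Rabs (y - l) < / (INR n + 1)) N) as [p Hp].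
    - exists (mkposreal _ (inv_INR_S_pos n)). intros y Hy. exact Hy.
    - exists p; auto. }
  destruct (choice _ Hg) as [g Hg'].
  pose (phi := fix phi n := match n with 0%nat => g (0, 0)%nat | S k => g (S k, S (phi k)) end).
  exists phi. split.
  - intros n. simpl. destruct (Hg' (S n, S (phi n))). simpl in *. lia.
  - exists l. intros e He. destruct (inv_INR_S_lt e He) as [N HN]. exists N. intros n Hn.
    unfold R_dist. eapply Rlt_trans; [| apply (HN n Hn)].
    destruct n; apply Hg'.
Qed.

Lemma Bolzano_Weierstrass_pt (a : nat -> pt) M :
  (forall n, dist2 (a n) (0,0) <= M) ->
  exists f, strictly_increasing f /\ exists l, Un_cv_pt (fun n => a (f n)) l.
Proof.
  intros HM.
  assert (H1 : forall n, Rabs (fst (a n)) <= M).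
  { intros n. pose proof (Rabs_fst_le_dist2 (a n) (0,0)). simpl in H. rewrite Rminus_0_r in H.
    specialize (HM n). lra. }
  assert (H2 : forall n, Rabs (snd (a n)) <= M).
  { intros n. pose proof (Rabs_snd_le_dist2 (a n) (0,0)). simpl in H. rewrite Rminus_0_r in H.
    specialize (HM n). lra. }
  destruct (Bolzano_Weierstrass_R (fun n => fst (a n)) M H1) as [f [Hf [l1 Hl1]]].
  destruct (Bolzano_Weierstrass_R (fun n => snd (a (f n))) M (fun n => H2 (f n)))
    as [g [Hg [l2 Hl2]]].
  exists (fun n => f (g n)). split; [apply strictly_increasing_comp; auto|].
  exists (l1, l2). split; simpl; auto.
  apply (Un_cv_subseq (fun n => fst (a (f n))) l1 g); auto.
Qed.

Lemma choice3 {A B C : Type} (P : nat -> A -> B -> C -> Prop) :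
  (forall n, exists a b c, P n a b c) ->
  exists (U : nat -> A) (X : nat -> B) (Y : nat -> C), forall n, P n (U n) (X n) (Y n).
Proof.
  intros H.
  destruct (choice (fun n t => P n (fst (fst t)) (snd (fst t)) (snd t))) as [T HT].
  { intros n. destruct (H n) as [a [b [c Habc]]]. exists (a, b, c). exact Habc. }
  exists (fun n => fst (fst (T n))), (fun n => snd (fst (T n))), (fun n => snd (T n)). exact HT.
Qed.

Definition seq_closed (S : pset) : Prop :=
  forall a l, (forall n, S (a n)) -> Un_cv_pt a l -> S l.

Definition seq_compact (S : pset) : Prop :=
  forall a, (forall n, S (a n)) ->
    exists f, strictly_increasing f /\ exists l, S l /\ Un_cv_pt (fun n => a (f n)) l.

Definition seq_continuous (g : pt -> R) : Prop :=
  forall a l, Un_cv_pt a l -> Un_cv (fun n => g (a n)) (g l).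

Lemma is_closed_seq_closed S : is_closed S -> seq_closed S.
Proof.
  intros HS a l Ha Hl. apply HS. intros e He.
  destruct (proj1 (Un_cv_pt_dist2 a l) Hl e He) as [N HN].
  exists (a N). split; auto. rewrite dist2_sym. apply HN. lia.
Qed.

Lemma seq_closed_bounded_seq_compact S : seq_closed S -> is_bounded S -> seq_compact S.
Proof.
  intros HS [M HM] a Ha.
  destruct (Bolzano_Weierstrass_pt a M (fun n => HM _ (Ha n))) as [f [Hf [l Hl]]].
  exists f. split; auto. exists l. split; auto. apply (HS (fun n => a (f n))); auto.
Qed.

Lemma seq_compact_restrict S P : seq_compact S -> seq_closed P -> seq_compact (fun x => S x /\ P x).
Proof.
  intros HS HP a Ha. destruct (HS a (fun n => proj1 (Ha n))) as [f [Hf [l [Sl Hl]]]].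
  exists f. split; auto. exists l. split; [split|]; auto.
  apply (HP (fun n => a (f n))); auto. intros n; apply Ha.
Qed.

Lemma unit_vec_seq_closed : seq_closed unit_vec.
Proof.
  intros U u HU Hu. unfold unit_vec. apply (UL_sequence (fun n => dot (U n) (U n))).
  - apply Un_cv_pt_dot; auto.
  - apply (Un_cv_ext (fun _ => 1)); [intros n; symmetry; apply HU | apply Un_cv_const].
Qed.

Lemma unit_vec_seq_compact : seq_compact unit_vec.
Proof.
  apply seq_closed_bounded_seq_compact; [apply unit_vec_seq_closed|].
  exists 1. intros u Hu. rewrite dist2_eq_sqrt, <- sqrt_1. right. f_equal.
  unfold unit_vec, dot, psub, padd, popp in *; simpl in *. lra.
Qed.

Lemma seq_continuous_dot u : seq_continuous (fun m => dot m u).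
Proof. intros a l H. apply Un_cv_pt_dot; auto. apply Un_cv_pt_const. Qed.

Section SeqCompactMax.

Variables (S : pset) (g : pt -> R).
Hypotheses (HS : seq_compact S) (Hg : seq_continuous g).

Lemma seq_compact_bounded_above : exists B, forall x, S x -> g x <= B.
Proof.
  apply NNPP. intros Hc.
  assert (Hn : forall n : nat, exists x, S x /\ INR n < g x).
  { intros n. apply NNPP. intros H. apply Hc. exists (INR n). intros x Sx.
    apply Rnot_lt_le. intros Hl. apply H. eauto. }
  destruct (choice _ Hn) as [a Ha].
  destruct (HS a (fun n => proj1 (Ha n))) as [f [Hf [l [_ Hl]]]].
  destruct (Hg _ _ Hl 1 Rlt_0_1) as [N HN].
  destruct (INR_archimed 1 (g l + 1)) as [n0 Hn0]; [lra|].
  set (n := max N n0). specialize (HN n ltac:(lia)). unfold R_dist in HN.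
  apply Rabs_def2 in HN. pose proof (proj2 (Ha (f n))).
  assert (INR n0 <= INR (f n)).
  { apply le_INR. pose proof (strictly_increasing_ge f Hf n). lia. }
  lra.
Qed.

Lemma seq_compact_max : (exists x, S x) -> exists m, S m /\ forall x, S x -> g x <= g m.
Proof.
  intros [x0 Sx0]. destruct seq_compact_bounded_above as [B HB].
  set (E := fun v => exists x, S x /\ v = g x).
  destruct (completeness E) as [s [Hs1 Hs2]].
  { exists B. intros v [x [Sx ->]]. auto. }
  { exists (g x0), x0. auto. }
  assert (Hn : forall n, exists x, S x /\ s - / (INR n + 1) < g x).
  { intros n. apply NNPP. intros Hc.
    assert (Hub : is_upper_bound E (s - / (INR n + 1))).
    { intros v [x [Sx ->]]. apply Rnot_lt_le. intros Hl. apply Hc. eauto. }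
    apply Hs2 in Hub. pose proof (inv_INR_S_pos n). lra. }
  destruct (choice _ Hn) as [a Ha].
  destruct (HS a (fun n => proj1 (Ha n))) as [f [Hf [m [Sm Hm]]]].
  exists m. split; auto.
  assert (s <= g m).
  { apply (@Rle_cv_lim (fun n => s - / (INR (f n) + 1)) (fun n => g (a (f n)))).
    - intros n. left. apply Ha.
    - pose proof (CV_minus _ _ _ _ (Un_cv_const s) (Un_cv_inv_INR_S f Hf)) as H.
      rewrite Rminus_0_r in H. exact H.
    - apply Hg; auto. }
  intros x Sx. assert (E (g x)) by (exists x; auto). apply Hs1 in H0. lra.
Qed.

End SeqCompactMax.

Lemma seq_compact_subseq3 S1 S2 S3 a1 a2 a3 :
  seq_compact S1 -> seq_compact S2 -> seq_compact S3 ->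
  (forall n, S1 (a1 n)) -> (forall n, S2 (a2 n)) -> (forall n, S3 (a3 n)) ->
  exists f, strictly_increasing f /\ exists l1 l2 l3, S1 l1 /\ S2 l2 /\ S3 l3 /\
    Un_cv_pt (fun n => a1 (f n)) l1 /\ Un_cv_pt (fun n => a2 (f n)) l2 /\
    Un_cv_pt (fun n => a3 (f n)) l3.
Proof.
  intros C1 C2 C3 H1 H2 H3.
  destruct (C1 a1 H1) as [f1 [Hf1 [l1 [S1l L1]]]].
  destruct (C2 (fun n => a2 (f1 n))) as [f2 [Hf2 [l2 [S2l L2]]]]; [intros; apply H2|].
  destruct (C3 (fun n => a3 (f1 (f2 n)))) as [f3 [Hf3 [l3 [S3l L3]]]]; [intros; apply H3|].
  assert (Hf23 : strictly_increasing (fun n => f2 (f3 n))) by (apply strictly_increasing_comp; auto).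
  exists (fun n => f1 (f2 (f3 n))). split; [apply strictly_increasing_comp; auto|].
  exists l1, l2, l3. refine (conj S1l (conj S2l (conj S3l (conj _ (conj _ L3))))).
  - exact (Un_cv_pt_subseq (fun n => a1 (f1 n)) l1 _ L1 Hf23).
  - exact (Un_cv_pt_subseq (fun n => a2 (f1 (f2 n))) l2 f3 L2 Hf3).
Qed.

Lemma convex_body_seq_compact K : convex_body K -> seq_compact K.
Proof.
  intros [_ [[Hc Hb] _]].
  apply seq_closed_bounded_seq_compact; [apply is_closed_seq_closed|]; auto.
Qed.

Lemma support_point_exists K u : convex_body K -> exists x, support_point K u x.
Proof.
  intros HK. destruct (seq_compact_max K (fun y => dot y u)) as [x [Kx Hx]].
  - apply convex_body_seq_compact; auto.
  - apply seq_continuous_dot.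
  - apply HK.
  - exists x. split; auto.
Qed.

Lemma support_point_boundary K u z : unit_vec u -> support_point K u z -> boundary K z.
Proof.
  intros Hu [Kz Hz]. split; auto. intros eps Heps.
  exists (padd z (pscale (eps / 2) u)). split.
  - rewrite dist2_eq_sqrt.
    replace (dot (psub z (padd z (pscale (eps / 2) u))) (psub z (padd z (pscale (eps / 2) u))))
      with (eps / 2 * (eps / 2) * dot u u)
      by (unfold dot, psub, padd, pscale, popp; simpl; ring).
    rewrite Hu, Rmult_1_r, sqrt_square; lra.
  - intros Hw. apply Hz in Hw. rewrite dot_padd_l, dot_pscale_l in Hw.
    unfold unit_vec in Hu. rewrite Hu in Hw. lra.
Qed.

Lemma support_point_unique K u x y : strictly_convex_body K -> unit_vec u ->
  support_point K u x -> support_point K u y -> x = y.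
Proof.
  intros [[_ [_ Hconv]] Hstrict] Hu [Kx Hx] [Ky Hy]. apply NNPP. intros Hne.
  apply (Hstrict x y Hne). intros z [t [Ht ->]].
  apply (support_point_boundary K u _ Hu). split; [apply Hconv; auto|].
  intros w Kw. rewrite dot_padd_l, !dot_pscale_l.
  pose proof (Hx w Kw); pose proof (Hx y Ky); pose proof (Hy x Kx). nra.
Qed.

Lemma support_point_limit K U Y e u y : seq_closed K -> (forall n, K (Y n)) ->
  (forall n w, K w -> dot w (U n) <= dot (Y n) (U n) + e n) -> Un_cv e 0 ->
  Un_cv_pt U u -> Un_cv_pt Y y -> support_point K u y.
Proof.
  intros HK KY HY He HU Hy. split; [apply (HK Y); auto|].
  intros w Kw. rewrite <- (Rplus_0_r (dot y u)).
  apply (@Rle_cv_lim (fun n => dot w (U n)) (fun n => dot (Y n) (U n) + e n)).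
  - intros n. apply HY; auto.
  - apply Un_cv_pt_dot; auto. apply Un_cv_pt_const.
  - apply CV_plus; auto. apply Un_cv_pt_dot; auto.
Qed.

Lemma support_point_modulus K rho : strictly_convex_body K -> 0 < rho -> exists eta, 0 < eta /\
  forall u x y, unit_vec u -> support_point K u x -> K y -> dot x u <= dot y u + eta ->
  dist2 y x < rho.
Proof.
  intros HK Hrho. apply NNPP. intros Hc.
  assert (Hn : forall n, exists u x y, unit_vec u /\ support_point K u x /\ K y /\
      dot x u <= dot y u + / (INR n + 1) /\ rho <= dist2 y x).
  { intros n. apply NNPP. intros H. apply Hc. exists (/ (INR n + 1)).
    split; [apply inv_INR_S_pos|]. intros u x y Hu Hx Ky Hd. apply Rnot_le_lt. intros Hd2.
    apply H. exists u, x, y. auto. }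
  destruct (choice3 _ Hn) as [U [X [Y HUXY]]].
  pose proof (convex_body_seq_compact K (proj1 HK)) as HKc.
  assert (HKcl : seq_closed K) by (apply is_closed_seq_closed, HK).
  destruct (seq_compact_subseq3 unit_vec K K U X Y unit_vec_seq_compact HKc HKc)
    as [phi [Hphi [u [x [y [Hu [_ [_ [CU [CX CY]]]]]]]]]]; try (intros n; apply HUXY).
  assert (Sx : support_point K u x).
  { apply (support_point_limit K (fun n => U (phi n)) (fun n => X (phi n)) (fun _ => 0));
      auto; try apply Un_cv_const; intros n; [apply HUXY|].
    intros w Kw. rewrite Rplus_0_r. apply HUXY; auto. }
  assert (Sy : support_point K u y).
  { apply (support_point_limit K (fun n => U (phi n)) (fun n => Y (phi n))
             (fun n => / (INR (phi n) + 1))); auto; intros n; [apply HUXY| |].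
    - intros w Kw. destruct (HUXY (phi n)) as [_ [[_ Hs] [_ [Hd _]]]].
      specialize (Hs w Kw). lra.
    - apply Un_cv_inv_INR_S; auto. }
  rewrite (support_point_unique K u x y HK Hu Sx Sy) in CX.
  assert (Hsq : rho * rho <= dot (psub y y) (psub y y)).
  { apply (@Rle_cv_lim (fun _ => rho * rho)
             (fun n => dot (psub (Y (phi n)) (X (phi n))) (psub (Y (phi n)) (X (phi n))))).
    - intros n. rewrite <- dist2_sqr. destruct (HUXY (phi n)) as [_ [_ [_ [_ Hd]]]]. nra.
    - apply Un_cv_const.
    - apply Un_cv_pt_dot; apply Un_cv_pt_psub; auto. }
  rewrite <- dist2_sqr, dist2_refl in Hsq. nra.
Qed.

Lemma support_point_hausdorff_close K eps : strictly_convex_body K -> 0 < eps ->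
  exists del, 0 < del /\ forall L u x y, hausdorff_lt K L del -> unit_vec u ->
  support_point L u x -> support_point K u y -> dist2 x y < eps.
Proof.
  intros HK He. destruct (support_point_modulus K (eps / 2) HK) as [eta [Heta Hm]]; [lra|].
  exists (Rmin (eps / 2) (eta / 3)). split; [apply Rmin_pos; lra|].
  intros L u x y [d [[Hd0 Hd] [HKL HLK]]] Hu [Lx Sx] [Ky Sy].
  pose proof (Rmin_l (eps / 2) (eta / 3)); pose proof (Rmin_r (eps / 2) (eta / 3)).
  destruct (HKL y Ky) as [y' [Ly' Dy']]. destruct (HLK x Lx) as [x' [Kx' Dx']].
  pose proof (Rabs_dot_psub_unit_le y y' u Hu) as U1.
  pose proof (Rabs_dot_psub_unit_le x x' u Hu) as U2. rewrite dist2_sym in U2.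
  rewrite dot_psub_l in U1, U2.
  pose proof (Rle_abs (dot y u - dot y' u)); pose proof (Rle_abs (dot x u - dot x' u)).
  pose proof (Sx y' Ly').
  assert (dist2 x' y < eps / 2).
  { apply (Hm u y x'); [| split | |]; auto; lra. }
  pose proof (dist2_triangle x x' y). rewrite (dist2_sym x x') in *. lra.
Qed.

Lemma middle_hedgehog_subset K m : is_convex K -> middle_hedgehog K m -> K m.
Proof.
  intros HK [u [x [y [_ [[Kx _] [[Ky _] ->]]]]]].
  replace (pscale (1/2) (padd x y)) with (padd (pscale (1 - 1/2) x) (pscale (1/2) y))
    by (unfold pscale, padd; simpl; f_equal; field).
  apply HK; auto; lra.
Qed.

Lemma middle_hedgehog_nonempty K : convex_body K -> exists m, middle_hedgehog K m.
Proof.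
  intros HK. set (u := (1, 0)).
  destruct (support_point_exists K u HK) as [x Hx].
  destruct (support_point_exists K (popp u) HK) as [y Hy].
  exists (pscale (1/2) (padd x y)), u, x, y.
  refine (conj _ (conj Hx (conj Hy eq_refl))). unfold unit_vec, dot, u; simpl; ring.
Qed.

Lemma middle_hedgehog_seq_compact K : strictly_convex_body K -> seq_compact (middle_hedgehog K).
Proof.
  intros HK a Ha. destruct (choice3 _ Ha) as [U [X [Y HUXY]]].
  pose proof (convex_body_seq_compact K (proj1 HK)) as HKc.
  assert (HKcl : seq_closed K) by (apply is_closed_seq_closed, HK).
  destruct (seq_compact_subseq3 unit_vec K K U X Y unit_vec_seq_compact HKc HKc)
    as [f [Hf [u [x [y [Hu [_ [_ [CU [CX CY]]]]]]]]]];
    [intros n; apply HUXY | intros n; apply HUXY | intros n; apply HUXY |].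
  exists f. split; auto. exists (pscale (1/2) (padd x y)). split.
  - exists u, x, y. refine (conj Hu (conj _ (conj _ eq_refl))).
    + apply (support_point_limit K (fun n => U (f n)) (fun n => X (f n)) (fun _ => 0));
        auto; try apply Un_cv_const; intros n; [apply HUXY|].
      intros w Kw. rewrite Rplus_0_r. apply HUXY; auto.
    + apply (support_point_limit K (fun n => popp (U (f n))) (fun n => Y (f n)) (fun _ => 0));
        auto; try apply Un_cv_const; [intros n; apply HUXY | | apply Un_cv_pt_popp; auto].
      intros n w Kw. rewrite Rplus_0_r. apply HUXY; auto.
  - apply (Un_cv_pt_ext (fun n => pscale (1/2) (padd (X (f n)) (Y (f n))))).
    + intros n. symmetry. apply HUXY.
    + apply Un_cv_pt_pscale, Un_cv_pt_padd; auto.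
Qed.

Lemma middle_hedgehog_hausdorff_close K eps : strictly_convex_body K -> 0 < eps ->
  exists del, 0 < del /\ forall L, strictly_convex_body L -> hausdorff_lt K L del ->
  hausdorff_le (middle_hedgehog K) (middle_hedgehog L) eps.
Proof.
  intros HK He. destruct (support_point_hausdorff_close K eps HK He) as [del [Hdel Hclose]].
  exists del. split; auto. intros L HL Hh.
  assert (Hmid : forall u x y x' y', unit_vec u ->
    support_point L u x -> support_point L (popp u) y ->
    support_point K u x' -> support_point K (popp u) y' ->
    dist2 (pscale (1/2) (padd x' y')) (pscale (1/2) (padd x y)) <= eps).
  { intros u x y x' y' Hu Sx Sy Sx' Sy'.
    rewrite dist2_sym. pose proof (dist2_midpoint_le x y x' y').
    pose proof (Hclose L u x x' Hh Hu Sx Sx').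
    pose proof (Hclose L (popp u) y y' Hh (unit_vec_popp u Hu) Sy Sy'). lra. }
  split.
  - intros m [u [x' [y' [Hu [Sx' [Sy' ->]]]]]].
    destruct (support_point_exists L u (proj1 HL)) as [x Sx].
    destruct (support_point_exists L (popp u) (proj1 HL)) as [y Sy].
    exists (pscale (1/2) (padd x y)). split.
    + exists u, x, y. exact (conj Hu (conj Sx (conj Sy eq_refl))).
    + apply (Hmid u); auto.
  - intros m [u [x [y [Hu [Sx [Sy ->]]]]]].
    destruct (support_point_exists K u (proj1 HK)) as [x' Sx'].
    destruct (support_point_exists K (popp u) (proj1 HK)) as [y' Sy'].
    exists (pscale (1/2) (padd x' y')). split.
    + exists u, x', y'. exact (conj Hu (conj Sx' (conj Sy' eq_refl))).
    + apply (Hmid u); auto.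
Qed.

Lemma conv_incl (M : pset) x : M x -> conv M x.
Proof. intros Mx C _ HC. auto. Qed.

Lemma halfplane_convex u s : is_convex (fun z => dot z u <= s).
Proof. intros x y t Hx Hy Ht. cbv beta in *. rewrite dot_padd_l, !dot_pscale_l. nra. Qed.

Lemma disc_convex c s : is_convex (fun z => dot (psub z c) (psub z c) <= s).
Proof.
  intros x y t Hx Hy Ht. cbv beta in *.
  assert (E : dot (psub (padd (pscale (1 - t) x) (pscale t y)) c) (psub (padd (pscale (1 - t) x) (pscale t y)) c)
    = (1 - t) * dot (psub x c) (psub x c) + t * dot (psub y c) (psub y c)
      - t * (1 - t) * dot (psub x y) (psub x y))
    by (unfold dot, psub, padd, pscale, popp; simpl; ring).
  assert (0 <= t * (1 - t) * dot (psub x y) (psub x y))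
    by (apply Rmult_le_pos; [nra | apply dot_self_ge_0]).
  rewrite E. nra.
Qed.

Lemma exposed_point_unit_normal C p : exposed_point C p ->
  exists u, unit_vec u /\ forall y, C y -> y <> p -> dot y u < dot p u.
Proof.
  intros [_ [v [Hv H]]]. pose proof (dot_self_pos v Hv) as Pv.
  set (n := sqrt (dot v v)).
  assert (Hn : 0 < n) by (apply sqrt_lt_R0; auto).
  assert (Hn2 : n * n = dot v v) by (apply sqrt_sqrt; lra).
  exists (pscale (/ n) v). split.
  - unfold unit_vec. rewrite dot_pscale_l, dot_comm, dot_pscale_l, <- Hn2. field. lra.
  - intros y Cy Hy. rewrite !(dot_comm _ (pscale _ _)), !dot_pscale_l, !(dot_comm v).
    apply Rmult_lt_compat_l; [apply Rinv_0_lt_compat|]; auto.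
Qed.

Lemma exposed_point_conv_mem M p : seq_compact M -> (exists x, M x) ->
  exposed_point (conv M) p -> M p.
Proof.
  intros HM Hne Hp. destruct (exposed_point_unit_normal _ _ Hp) as [u [_ Hexp]].
  destruct (seq_compact_max M (fun m => dot m u) HM (seq_continuous_dot u) Hne)
    as [m [Mm Hm]].
  assert (dot p u <= dot m u) by (apply (proj1 Hp); [apply halfplane_convex | auto]).
  destruct (classic (m = p)) as [<- | Hmp]; auto.
  pose proof (Hexp m (conv_incl M m Mm) Hmp). lra.
Qed.

Lemma exposed_gap M p u r : seq_compact M ->
  (forall m, M m -> m <> p -> dot m u < dot p u) -> 0 < r ->
  exists g, 0 < g /\ forall m, M m -> r <= dist2 m p -> dot m u <= dot p u - g.
Proof.
  intros HM Hexp Hr. set (F := fun m => M m /\ r <= dist2 m p).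
  assert (HF : seq_compact F).
  { apply seq_compact_restrict; auto. intros a l Ha Hl.
    apply (@Rle_cv_lim (fun _ => r) (fun n => dist2 (a n) p)); auto.
    - apply Un_cv_const.
    - apply Un_cv_dist2; auto. }
  destruct (classic (exists m, F m)) as [Hne | Hempty].
  - destruct (seq_compact_max F (fun m => dot m u) HF (seq_continuous_dot u) Hne)
      as [m0 [[Mm0 Dm0] Hm0]].
    assert (m0 <> p) by (intros ->; rewrite dist2_refl in Dm0; lra).
    pose proof (Hexp m0 Mm0 H).
    exists (dot p u - dot m0 u). split; [lra|].
    intros m Mm Dm. pose proof (Hm0 m (conj Mm Dm)). lra.
  - exists 1. split; [lra|]. intros m Mm Dm. exfalso. apply Hempty. exists m. split; auto.
Qed.

Lemma farthest_point_exposed (M : pset) q c : M q ->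
  (forall m, M m -> dist2 m c <= dist2 q c) -> q <> c -> exposed_point (conv M) q.
Proof.
  intros Mq Hfar Hqc. split; [apply conv_incl; auto|].
  exists (psub q c). split.
  - intros E. apply Hqc. destruct q as [q1 q2], c as [c1 c2].
    unfold psub, padd, popp in E; simpl in E. injection E. intros. f_equal; lra.
  - intros z Cz Hzq.
    assert (Bz : dot (psub z c) (psub z c) <= dot (psub q c) (psub q c)).
    { apply (Cz (fun z => dot (psub z c) (psub z c) <= dot (psub q c) (psub q c)));
        [apply disc_convex|].
      intros m Mm. rewrite <- !dist2_sqr. specialize (Hfar m Mm).
      pose proof (dist2_ge_0 m c). nra. }
    (* |z - c|^2 = |z - q|^2 + 2 (z - q).(q - c) + |q - c|^2 *)
    pose proof (dot_self_pos (psub z q)) as P.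
    assert (psub z q <> (0,0)).
    { intros E. apply Hzq. destruct z as [z1 z2], q as [q1 q2].
      unfold psub, padd, popp in E; simpl in E. injection E. intros. f_equal; lra. }
    specialize (P H).
    destruct z as [z1 z2], q as [q1 q2], c as [c1 c2].
    unfold dot, psub, padd, popp in *; simpl in *. nra.
Qed.

Lemma dist2_translate_unit p u t : unit_vec u -> 0 <= t -> dist2 p (padd p (pscale t u)) = t.
Proof.
  intros Hu Ht. rewrite dist2_eq_sqrt.
  replace (dot (psub p (padd p (pscale t u))) (psub p (padd p (pscale t u)))) with (t * t * dot u u)
    by (unfold dot, psub, padd, pscale, popp; simpl; ring).
  rewrite Hu, Rmult_1_r. apply sqrt_square; auto.
Qed.

(* [p] itself is at distance [T] from the centre [p - T u], so no farthest point
   from that centre of a set close to [M_K] can be near such an [m]. *)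
Lemma dist2_far_center_lt p m u g D T : unit_vec u -> 0 < g -> g <= T -> D * D <= T * g ->
  dist2 m p <= D -> dot m u <= dot p u - g -> dist2 m (padd p (pscale (- T) u)) < T - g / 2.
Proof.
  intros Hu Hg HT HTg HD Hm.
  pose proof (dist2_ge_0 m p) as Hmp0.
  assert (Hmp : dot (psub m p) (psub m p) <= D * D) by (rewrite <- dist2_sqr; nra).
  assert (E : dot (psub m (padd p (pscale (- T) u))) (psub m (padd p (pscale (- T) u)))
            = dot (psub m p) (psub m p) + 2 * T * (dot m u - dot p u) + T * T * dot u u)
    by (unfold dot, psub, padd, pscale, popp; simpl; ring).
  rewrite Hu, Rmult_1_r in E.
  rewrite dist2_eq_sqrt, <- (sqrt_square (T - g / 2)) by lra.
  apply sqrt_lt_1; [apply dot_self_ge_0 | nra |]. rewrite E. nra.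
Qed.

Lemma middle_hedgehog_diameter_bound K : strictly_convex_body K ->
  exists D, forall m m', middle_hedgehog K m -> middle_hedgehog K m' -> dist2 m m' <= D.
Proof.
  intros [[_ [[_ [R HR]] Hconv]] _]. exists (R + R). intros m m' Hm Hm'.
  pose proof (HR m (middle_hedgehog_subset K m Hconv Hm)).
  pose proof (HR m' (middle_hedgehog_subset K m' Hconv Hm')).
  pose proof (dist2_triangle m (0,0) m'). rewrite (dist2_sym (0,0) m') in H1. lra.
Qed.

Lemma exposed_point_persists K p r : strictly_convex_body K ->
  exposed_point (conv (middle_hedgehog K)) p -> 0 < r ->
  exists del, 0 < del /\ forall L, strictly_convex_body L -> hausdorff_lt K L del ->
  exists q, dist2 q p < r /\ exposed_point (conv (middle_hedgehog L)) q.
Proof.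
  intros HK Hp Hr.
  pose proof (middle_hedgehog_seq_compact K HK) as HMK.
  assert (Mp : middle_hedgehog K p).
  { apply (exposed_point_conv_mem _ _ HMK); auto. apply middle_hedgehog_nonempty, HK. }
  destruct (exposed_point_unit_normal _ _ Hp) as [u [Hu Hexp]].
  destruct (exposed_gap (middle_hedgehog K) p u (r / 2) HMK) as [g [Hg Hgap]]; [|lra|].
  { intros m Mm Hmp. apply Hexp; auto. apply conv_incl; auto. }
  destruct (middle_hedgehog_diameter_bound K HK) as [D HD].
  set (eps := Rmin (g / 4) (r / 2)).
  assert (Heps : 0 < eps) by (apply Rmin_pos; lra).
  assert (Heps_g : eps <= g / 4) by apply Rmin_l.
  assert (Heps_r : eps <= r / 2) by apply Rmin_r.
  destruct (middle_hedgehog_hausdorff_close K eps HK Heps) as [del [Hdel Hclose]].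
  exists del. split; auto. intros L HL Hh. destruct (Hclose L HL Hh) as [HKL HLK].
  set (T := D * D / g + g). set (c := padd p (pscale (- T) u)).
  assert (ET : T * g = D * D + g * g) by (unfold T; field; lra).
  assert (HTg : D * D <= T * g) by nra.
  assert (HT : g <= T) by nra.
  assert (Dpc : dist2 p c = T).
  { unfold c. replace (pscale (- T) u) with (pscale T (popp u))
      by (unfold pscale, popp; simpl; f_equal; ring).
    apply dist2_translate_unit; [apply unit_vec_popp |]; auto; lra. }
  destruct (seq_compact_max (middle_hedgehog L) (fun m => dist2 m c)
              (middle_hedgehog_seq_compact L HL) (fun a l Hl => Un_cv_dist2 a l c Hl)
              (middle_hedgehog_nonempty L (proj1 HL))) as [q [Mq Hq]].
  destruct (HKL p Mp) as [p' [Mp' Dpp']].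
  destruct (HLK q Mq) as [m [Mm Dmq]].
  assert (Dqc : T - eps <= dist2 q c).
  { pose proof (Hq p' Mp'). pose proof (dist2_triangle p p' c). lra. }
  assert (Dmp : dist2 m p < r / 2).
  { apply Rnot_le_lt. intros Hmp.
    pose proof (dist2_far_center_lt p m u g D T Hu Hg HT HTg (HD m p Mm Mp) (Hgap m Mm Hmp)) as Hmc.
    fold c in Hmc.
    pose proof (dist2_triangle q m c) as Htri. rewrite (dist2_sym q m) in Htri. lra. }
  exists q. split.
  - pose proof (dist2_triangle q m p) as Htri. rewrite (dist2_sym q m) in Htri. lra.
  - apply (farthest_point_exposed _ q c); auto.
    intros ->. rewrite dist2_refl in Dqc. lra.
Qed.

Lemma not_at_most_k_exposed_list k C : ~ at_most_k_exposed k C ->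
  exists l, NoDup l /\ length l = S k /\ forall x, In x l -> exposed_point C x.
Proof.
  intros Hn. enough (H : forall n, (n <= S k)%nat ->
    exists l, NoDup l /\ length l = n /\ forall x, In x l -> exposed_point C x) by (apply H; lia).
  induction n as [|n IH]; intros Hle.
  - exists nil. split; [constructor | split; [reflexivity | intros x []]].
  - destruct (IH ltac:(lia)) as [l [Hl [Hlen Hx]]].
    destruct (classic (exists x, exposed_point C x /\ ~ In x l)) as [[x [Ex Nx]] | Hc].
    + exists (x :: l). split; [constructor; auto | split; [simpl; lia |]].
      intros y [<- | Hy]; auto.
    + exfalso. apply Hn. exists l. split; [lia|].
      intros x Ex. apply NNPP. intros Nx. apply Hc. eauto.
Qed.

Lemma list_separation_from x (l : list pt) :
  exists r, 0 < r /\ forall b, In b l -> x <> b -> 2 * r <= dist2 x b.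
Proof.
  induction l as [|y l [r [Hr H]]].
  - exists 1. split; [lra | intros b []].
  - destruct (classic (x = y)) as [<- | E].
    + exists r. split; auto. intros b [<- | Hb] Hxb; [contradiction | auto].
    + pose proof (dist2_pos x y E). exists (Rmin r (dist2 x y / 2)).
      pose proof (Rmin_l r (dist2 x y / 2)); pose proof (Rmin_r r (dist2 x y / 2)).
      split; [apply Rmin_pos; lra|].
      intros b [<- | Hb] Hxb; [lra|]. pose proof (H b Hb Hxb). lra.
Qed.

Lemma list_separation (l : list pt) :
  exists r, 0 < r /\ forall a b, In a l -> In b l -> a <> b -> 2 * r <= dist2 a b.
Proof.
  induction l as [|x l [r0 [Hr0 H0]]].
  - exists 1. split; [lra | intros a b []].
  - destruct (list_separation_from x l) as [r1 [Hr1 H1]].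
    exists (Rmin r0 r1). split; [apply Rmin_pos; lra|].
    pose proof (Rmin_l r0 r1); pose proof (Rmin_r r0 r1).
    intros a b [<- | Ha] [<- | Hb] Hab.
    + contradiction.
    + pose proof (H1 b Hb Hab). lra.
    + rewrite dist2_sym. pose proof (H1 a Ha (not_eq_sym Hab)). lra.
    + pose proof (H0 a b Ha Hb Hab). lra.
Qed.

Lemma Forall2_In_r {A B} (P : A -> B -> Prop) l l' y :
  Forall2 P l l' -> In y l' -> exists x, In x l /\ P x y.
Proof.
  induction 1 as [|x y' l l' Hxy _ IH]; simpl; [intros []|].
  intros [<- | Hy]; [exists x; auto|].
  destruct (IH Hy) as [z [Hz Pz]]. exists z; auto.
Qed.

Lemma NoDup_Forall2_close r l l' : Forall2 (fun p q => dist2 q p < r) l l' -> NoDup l ->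
  (forall a b, In a l -> In b l -> a <> b -> 2 * r <= dist2 a b) -> NoDup l'.
Proof.
  induction 1 as [|p q l l' Hpq H IH]; intros Hn Hs; [constructor|].
  inversion Hn as [|? ? Hp Hl]; subst. constructor.
  - intros Hq. destruct (Forall2_In_r _ _ _ _ H Hq) as [p' [Hp' Dp']].
    assert (p <> p') by (intros ->; contradiction).
    pose proof (Hs p p' (or_introl eq_refl) (or_intror Hp') H0).
    pose proof (dist2_triangle p q p'). rewrite (dist2_sym p q) in H2. lra.
  - apply IH; auto. intros a b Ha Hb. apply Hs; simpl; auto.
Qed.

Lemma hausdorff_lt_le_trans K L d d' : hausdorff_lt K L d -> d <= d' -> hausdorff_lt K L d'.
Proof. intros [x [Hx H]] Hd. exists x. split; [lra | auto]. Qed.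

Lemma exposed_points_persist K r l : strictly_convex_body K -> 0 < r ->
  (forall p, In p l -> exposed_point (conv (middle_hedgehog K)) p) ->
  exists del, 0 < del /\ forall L, strictly_convex_body L -> hausdorff_lt K L del ->
  exists l', Forall2 (fun p q => dist2 q p < r /\ exposed_point (conv (middle_hedgehog L)) q) l l'.
Proof.
  intros HK Hr. induction l as [|p l IH]; intros Hl.
  - exists 1. split; [lra|]. intros. exists nil. constructor.
  - destruct IH as [d2 [Hd2 H2]]; [intros; apply Hl; simpl; auto|].
    destruct (exposed_point_persists K p r HK (Hl p (or_introl eq_refl)) Hr) as [d1 [Hd1 H1]].
    exists (Rmin d1 d2). split; [apply Rmin_pos; auto|].
    intros L HL Hh.
    destruct (H1 L HL (hausdorff_lt_le_trans K L _ _ Hh (Rmin_l d1 d2))) as [q Hq].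
    destruct (H2 L HL (hausdorff_lt_le_trans K L _ _ Hh (Rmin_r d1 d2))) as [l' Hl'].
    exists (q :: l'). constructor; auto.
Qed.

Theorem lemma2 : forall k : nat, closed_in_Kstar (A_k k).
Proof.
  intros k K HK HnA.
  assert (Hn : ~ at_most_k_exposed k (conv (middle_hedgehog K))) by (intros H; apply HnA; split; auto).
  destruct (not_at_most_k_exposed_list k _ Hn) as [l [Hnd [Hlen Hex]]].
  destruct (list_separation l) as [r [Hr Hsep]].
  destruct (exposed_points_persist K r l HK Hr Hex) as [del [Hdel Hpersist]].
  exists del. split; auto. intros L HL Hh [_ [l'' [Hlen'' Hin]]].
  destruct (Hpersist L HL Hh) as [l' Hl'].
  assert (Hnd' : NoDup l').
  { apply (NoDup_Forall2_close r l); auto.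
    eapply Forall2_impl; [|exact Hl']. intros ? ? []; auto. }
  assert (Hincl : incl l' l'').
  { intros q Hq. apply Hin. destruct (Forall2_In_r _ _ _ _ Hl' Hq) as [p [_ [_ E]]]. auto. }
  pose proof (NoDup_incl_length Hnd' Hincl). pose proof (Forall2_length Hl'). lia.
Qed.
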